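(* Let $m\geq 2$ and $V=\mathbb{C}^{2m}$ with the symplectic form and Wronski map described in the context. For every $H\in\mathrm{Gr}(m,V)$ we have $\mathrm{Wr}(H^\angle)=\mathrm{Wr}(H)$.
   Context: $V=\mathbb{C}^{2m}$ has basis $\mathbf{e}_0,\dots,\mathbf{e}_{2m-1}$ with dual basis $\mathbf{e}_0^*,\dots,\mathbf{e}_{2m-1}^*$ of $V^*$. Identify $V^*$ with $\mathbb{C}_{2m-1}[t]$ (polynomials of degree $\le 2m-1$) via $\sum_i u_i\mathbf{e}_i^*\mapsto\sum_i u_it^i/i!$. $V$ carries the symplectic form $\langle p,q\rangle=\sum_{i=0}^{2m-1}(-1)^ip_iq_{2m-1-i}$ for $p=\sum p_i\mathbf{e}_i$, $q=\sum q_i\mathbf{e}_i$. For $H\in\mathrm{Gr}(m,V)$ (the Grassmannian of $m$-dimensional subspaces), $H^\angle=\{v\in V:\langle u,v\rangle=0\ \forall u\in H\}$, again $m$-dimensional. For $H\in\mathrm{Gr}(m,V)$, let $f_1,\dots,f_m\in\mathbb{C}_{2m-1}[t]$ be a basis of its annihilator $H^\perp\subset V^*$; $\mathrm{Wr}(H)\in\mathbb{P}(\mathbb{C}_{m^2}[t])$ is the class of the Wronskian $\det(f_j^{(i-1)}(t))_{i,j=1}^m$, which is well defined up to a nonzero scalar. *)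

From HB Require Import structures.
From mathcomp Require Import all_boot all_order all_algebra.
From mathcomp Require Import reals.
From mathcomp.real_closed Require Import complex.
Set Implicit Arguments. Unset Strict Implicit. Unset Printing Implicit Defensive.
Import Order.TTheory GRing.Theory Num.Theory.
Local Open Scope ring_scope.

Section Defs.
Variable F : fieldType.

(* Subspaces of V = F^n are represented by the row space of a matrix
   (mxalgebra).  Vectors of V and of V^* are row vectors 'rV_n, with the
   pairing e_i^*(e_j) = delta_ij, i.e. u(v) = \sum_i u_i v_i. *)

(* Gram matrix of the symplectic form on F^(2m):
   <p,q> = \sum_i (-1)^i p_i q_(2m-1-i) = p *m sympJ *m q^T *)
Definition sympJ (m : nat) : 'M[F]_(m.*2) :=
  \matrix_(i < m.*2, j < m.*2) (if (i + j == m.*2.-1)%N then (-1) ^+ i else 0).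

(* H^angle = { v | <u,v> = 0 for all u in H } : u *m J *m v^T = 0 for all rows u
   of H, i.e. v *m (H *m J)^T = 0. *)
Definition symp_perp (m : nat) (H : 'M[F]_(m.*2)) : 'M[F]_(m.*2) :=
  kermx ((H *m sympJ m)^T).

Definition annih (n : nat) (H : 'M[F]_n) : 'M[F]_n := kermx H^T.

(* Identification V^* = F_(n-1)[t] : sum_i u_i e_i^* |-> sum_i u_i t^i / i! *)
Definition dual_to_poly (n : nat) (u : 'rV[F]_n) : {poly F} :=
  \sum_(i < n) (u 0 i / (i`!)%:R) *: 'X^i.

Definition wronskian (k : nat) (f : 'I_k -> {poly F}) : {poly F} :=
  \det (\matrix_(i < k, j < k) (f j)^`(i)).

Definition Wr (n : nat) (H : 'M[F]_n) : {poly F} :=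
  wronskian (fun j => dual_to_poly (row j (row_base (annih H)))).

(* Equality in the projective space P(F[t]): equal up to a nonzero scalar. *)
Definition proj_eq (p q : {poly F}) : Prop :=
  exists2 c : F, c != 0 & p = c *: q.

End Defs.

From HB Require Import structures.
From mathcomp Require Import all_boot all_order all_algebra.
From mathcomp Require Import reals.
From mathcomp.real_closed Require Import complex.
From mathcomp Require Import zify.
Set Implicit Arguments. Unset Strict Implicit. Unset Printing Implicit Defensive.
Import Order.TTheory GRing.Theory Num.Theory.
Local Open Scope ring_scope.
Local Open Scope complex_scope.

(* For polynomials f, g of degree < N the alternating sum
   \sum_a (-1)^a f^(a) g^(N-1-a) has a telescoping derivative, so it is the
   constant obtained at t = 0: the symplectic pairing of the coefficient
   vectors of f and g in the basis t^k/k!.  Hence the jet matrices of bases of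
   H^perp and (H^angle)^perp, whose rows are symplectically orthogonal, are
   orthogonal for the constant Gram matrix J.  Completing a basis U of H^perp
   by a left inverse of J V^T to an invertible constant matrix, a block
   determinant identity expresses the Wronskian of U (the determinant of its
   first m jet columns) as a nonzero constant times the Wronskian of V. *)

Section SignedAntidiagonal.
Variable R : comNzRingType.

(* [sympJ m] is convertible to [sgn_antidiag m.*2]. *)
Definition sgn_antidiag N : 'M[R]_N :=
  \matrix_(i < N, j < N) (if (i + j == N.-1)%N then (-1) ^+ i else 0).

Lemma sgn_antidiagE N (i j : 'I_N) :
  sgn_antidiag N i j = if j == rev_ord i then (-1) ^+ i else 0.
Proof.
rewrite mxE; congr (if _ then _ else _); apply/eqP/eqP => [e|->].
  by apply: val_inj => /=; move: (ltn_ord i) (ltn_ord j) e; lia.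
by move: (ltn_ord i) => /=; lia.
Qed.

Lemma sgn_antidiag_mul_tr N : sgn_antidiag N *m (sgn_antidiag N)^T = 1%:M.
Proof.
apply/matrixP => i k; rewrite [LHS]mxE [RHS]mxE (bigD1 (rev_ord i)) //= big1 ?addr0.
  rewrite [_^T _ _]mxE !sgn_antidiagE !(inj_eq rev_ord_inj) eqxx.
  by case: eqP => [<-|_]; rewrite ?mulr0 // -exprMn mulrNN mulr1 expr1n.
by move=> j /negbTE ne_j; rewrite sgn_antidiagE ne_j mul0r.
Qed.

Lemma mulmx_sgn_antidiagE p N (A : 'M[R]_(p, N)) i j :
  (A *m sgn_antidiag N) i j = (-1) ^+ rev_ord j * A i (rev_ord j).
Proof.
rewrite mxE (bigD1 (rev_ord j)) //= big1 ?addr0 => [|k ne_k].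
  by rewrite sgn_antidiagE rev_ordK eqxx mulrC.
rewrite sgn_antidiagE; case: eqP => [e|_]; last by rewrite mulr0.
by rewrite e rev_ordK eqxx in ne_k.
Qed.

Lemma mulmx_sgn_antidiag_tr N p q (A : 'M[R]_(p, N)) (B : 'M[R]_(q, N)) i j :
  (A *m sgn_antidiag N *m B^T) i j =
  \sum_(a < N) (-1) ^+ a * (A i a * B j (rev_ord a)).
Proof.
rewrite mxE (reindex_inj rev_ord_inj); apply: eq_bigr => a _.
by rewrite mulmx_sgn_antidiagE rev_ordK mxE mulrA.
Qed.

Lemma dsubmx_sgn_antidiag m :
  dsubmx (sgn_antidiag (m + m)) = row_mx ((-1) ^+ m *: sgn_antidiag m) 0.
Proof.
rewrite -[LHS]hsubmxK; congr row_mx; apply/matrixP => i j; rewrite !mxE /=.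
  have -> : (m + i + j == (m + m).-1)%N = (i + j == m.-1)%N.
    by apply/eqP/eqP; move: (ltn_ord i) (ltn_ord j); lia.
  by case: ifP; rewrite ?mulr0 // exprD.
rewrite (_ : (_ == _) = false) //; apply/eqP.
by move: (ltn_ord i) (ltn_ord j); lia.
Qed.

End SignedAntidiagonal.

Arguments sgn_antidiag {R} N.

Lemma map_sgn_antidiag (R S : comNzRingType) (f : {rmorphism R -> S}) N :
  map_mx f (sgn_antidiag N) = sgn_antidiag N.
Proof.
by apply/matrixP => i j; rewrite !mxE; case: ifP; rewrite ?rmorph0 ?rmorph_sign.
Qed.

Lemma sgn_antidiag_unitmx (R : comUnitRingType) N : sgn_antidiag N \in @unitmx R N.
Proof. by case: (mulmx1_unit (sgn_antidiag_mul_tr R N)). Qed.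

(* Multiply on the right by the block matrix [[1, usubmx Q], [0, dsubmx Q]]. *)
Lemma det_col_mx_dsubmx (R : comNzRingType) m n (A : 'M[R]_(m, m + n))
    (C : 'M[R]_(n, m + n)) (Q : 'M[R]_(m + n, n)) :
  A *m Q = 0 -> \det (col_mx A C) * \det (dsubmx Q) = \det (lsubmx A) * \det (C *m Q).
Proof.
move=> AQ; have block_prod : col_mx A C *m block_mx 1%:M (usubmx Q) 0 (dsubmx Q)
                            = block_mx (lsubmx A) 0 (lsubmx C) (C *m Q).
  rewrite -{1}[A]hsubmxK -{1}[C]hsubmxK -block_mxEv mulmx_block.
  by rewrite !mulmx1 !mulmx0 !addr0 -!mul_row_col !hsubmxK vsubmxK AQ.
have := congr1 determinant block_prod.
by rewrite det_mulmx det_ublock det1 mul1r det_lblock.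
Qed.

Lemma row_free_col_mx (F : fieldType) m k n (U : 'M[F]_(m, n)) (C : 'M[F]_(k, n))
    (K : 'M[F]_(n, k)) :
  row_free U -> U *m K = 0 -> C *m K = 1%:M -> row_free (col_mx U C).
Proof.
move=> /row_freeP[Y UY] UK CK; apply/row_freeP; exists (row_mx (Y - K *m (C *m Y)) K).
rewrite mul_col_row !mulmxBr !mulmxA UY UK CK !mul0mx mul1mx subr0 subrr.
by rewrite -scalar_mx_block.
Qed.

Lemma deriv_sum_sign_derivn (R : comNzRingType) N (f g : {poly R}) :
  (size f <= N)%N -> (size g <= N)%N ->
  (\sum_(a < N) (-1) ^+ a * (f^`(a) * g^`(N - a.+1)))^`() = 0.
Proof.
move=> szf szg; pose T a := (-1) ^+ a * (f^`(a) * g^`(N - a)) : {poly R}.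
rewrite raddf_sum /= (eq_bigr (fun a : 'I_N => - (T a.+1 - T a))) => [|a _].
  rewrite sumrN -(big_mkord xpredT (fun a => T a.+1 - T a)) telescope_sumr //.
  rewrite /T subn0 subnn (derivn_poly0 szf) (derivn_poly0 szg).
  by rewrite !(mulr0, mul0r) subrr oppr0.
have sign' : ((-1) ^+ a : {poly R})^`() = 0 by rewrite -polyCN -rmorphXn derivC.
rewrite derivM sign' mul0r add0r derivM -!derivnS subnSK // /T exprS mulN1r.
by rewrite mulNr opprB opprK mulrDr addrC.
Qed.

Section DividedPowers.
Variable F : fieldType.
Hypothesis F_char0 : has_pchar0 F.

Lemma natf_eq0 n : (n%:R == 0 :> F) = (n == 0)%N.
Proof. exact: (pcharf0P F).1 F_char0 n. Qed.

Lemma deriv_eq0_polyC (p : {poly F}) : p^`() = 0 -> p = (p.[0])%:P.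
Proof.
move=> p'0; apply/polyP => -[|i]; rewrite coefC horner_coef0 //=.
have /eqP := congr1 (fun q : {poly F} => q`_i) p'0.
by rewrite coef_deriv coef0 -mulr_natr mulf_eq0 natf_eq0 orbF => /eqP.
Qed.

Definition divpow k : {poly F} := (k`!%:R)^-1 *: 'X^k.

Lemma size_divpow k : (size (divpow k) <= k.+1)%N.
Proof. by rewrite (leq_trans (size_scale_leq _ _)) // size_polyXn. Qed.

Lemma natf_fact_neq0 k : (k`!%:R : F) != 0.
Proof. by rewrite natf_eq0 -lt0n fact_gt0. Qed.

Lemma horner0_derivn_divpow k a : ((divpow k)^`(a)).[0] = (a == k)%:R.
Proof.
rewrite horner_coef0 derivnZ derivnXn coefZ coefMn coefXn.
case: (ltngtP a k) => [a_lt_k|k_lt_a|->].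
- by rewrite eq_sym subn_eq0 leqNgt a_lt_k mul0rn mulr0.
- by rewrite ffact_small // mulr0n mulr0.
- by rewrite subnn eqxx ffactnn mulVf ?natf_fact_neq0.
Qed.

Lemma derivn_divpow_diag k : (divpow k)^`(k) = 1.
Proof.
rewrite derivnZ derivnXn subnn expr0 ffactnn -scaler_nat scalerA.
by rewrite mulVf ?natf_fact_neq0 ?scale1r.
Qed.

Definition jets k N (f : 'I_k -> {poly F}) : 'M[{poly F}]_(k, N) :=
  \matrix_(j, a) (f j)^`(a).

Lemma wronskian_jets k (f : 'I_k -> {poly F}) : wronskian f = \det (jets k f).
Proof. by rewrite -det_tr; congr (\det _); apply/matrixP => i j; rewrite !mxE. Qed.

Lemma lsubmx_jets k m n (f : 'I_k -> {poly F}) : lsubmx (jets (m + n) f) = jets m f.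
Proof. by apply/matrixP => i j; rewrite !mxE. Qed.

Definition divpow_jets n N : 'M[{poly F}]_(n, N) := jets N (fun c : 'I_n => divpow c).

Lemma jets_dual_to_poly k n N (U : 'M[F]_(k, n)) :
  jets N (fun j => dual_to_poly (row j U)) = map_mx polyC U *m divpow_jets n N.
Proof.
apply/matrixP => j a; rewrite !mxE /dual_to_poly raddf_sum /=.
by apply: eq_bigr => c _; rewrite !mxE mul_polyC -derivnZ scalerA.
Qed.

Lemma det_divpow_jets N : \det (divpow_jets N N) = 1.
Proof.
rewrite det_trig; last first.
  apply/is_trig_mxP => k a k_lt_a; rewrite mxE derivn_poly0 //.
  exact: leq_trans (size_divpow k) k_lt_a.
by rewrite big1 // => k _; rewrite mxE derivn_divpow_diag.
Qed.

Lemma horner0_divpow_jets N : map_mx (horner_eval 0) (divpow_jets N N) = 1%:M.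
Proof.
by apply/matrixP => k a; rewrite !mxE horner_evalE horner0_derivn_divpow eq_sym.
Qed.

Lemma divpow_jets_sgn_antidiag N :
  divpow_jets N N *m sgn_antidiag N *m (divpow_jets N N)^T = sgn_antidiag N.
Proof.
set M := _ *m _ *m _.
have szN (k : 'I_N) : (size (divpow k) <= N)%N := leq_trans (size_divpow k) (ltn_ord k).
have M'0 k l : (M k l)^`() = 0.
  rewrite mulmx_sgn_antidiag_tr -[RHS](deriv_sum_sign_derivn (szN k) (szN l)).
  by congr (_^`()); apply: eq_bigr => a _; rewrite !mxE.
have M0 : map_mx (horner_eval 0) M = sgn_antidiag N.
  by rewrite !map_mxM -map_trmx horner0_divpow_jets map_sgn_antidiag trmx1 mulmx1 mul1mx.
apply/matrixP => k l; rewrite (deriv_eq0_polyC (M'0 k l)).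
have -> : (M k l).[0] = sgn_antidiag N k l by rewrite -M0 [RHS]mxE.
by rewrite -[in RHS](map_sgn_antidiag polyC) [RHS]mxE.
Qed.

Definition wronskian_rows k n (U : 'M[F]_(k, n)) : {poly F} :=
  wronskian (fun j => dual_to_poly (row j U)).

Lemma wronskian_rowsE k n (U : 'M[F]_(k, k + n)) :
  wronskian_rows U = \det (lsubmx (map_mx polyC U *m divpow_jets (k + n) (k + n))).
Proof. by rewrite -mulmx_lsub lsubmx_jets -jets_dual_to_poly -wronskian_jets. Qed.

(* The jets of the rows of any A are A E; with C a left inverse of
   K := J V^T and Q := J (V E)^T, the identity E J E^T = J gives A E Q = A K,
   so det_col_mx_dsubmx for U E, C E and Q reads
   det (col_mx U C) * det (dsubmx Q) = W(U), and dsubmx Q is an invertible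
   constant matrix times the transposed first m jet columns of V. *)
Lemma wronskian_rows_sgn_antidiag_orth m (U V : 'M[F]_(m, m + m)) :
  row_free U -> row_free V -> U *m sgn_antidiag (m + m) *m V^T = 0 ->
  proj_eq (wronskian_rows V) (wronskian_rows U).
Proof.
move=> freeU /row_freeP[Y VY] UJV.
set J := sgn_antidiag (m + m) in UJV *; pose E := divpow_jets (m + m) (m + m).
pose K := J *m V^T; pose C := Y^T *m J^T.
have CK : C *m K = 1%:M.
  have JtJ : J^T *m J = 1%:M := mulmx1C (sgn_antidiag_mul_tr _ _).
  by rewrite mulmxA -(mulmxA Y^T) JtJ mulmx1 -trmx_mul VY trmx1.
have detX : \det (col_mx U C) != 0.
  have := row_free_col_mx freeU (_ : U *m K = 0) CK; rewrite mulmxA UJV => /(_ erefl).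
  by rewrite row_free_unit unitmxE unitfE.
pose Q := map_mx polyC J *m (map_mx polyC V *m E)^T.
have jetsQ (k : nat) (A : 'M[F]_(k, m + m)) :
    map_mx polyC A *m E *m Q = map_mx polyC (A *m K).
  rewrite /Q trmx_mul map_trmx !mulmxA -2!(mulmxA (map_mx polyC A)) map_sgn_antidiag.
  by rewrite divpow_jets_sgn_antidiag -(map_sgn_antidiag polyC) !map_mxM.
have := det_col_mx_dsubmx (map_mx polyC C *m E) (_ : map_mx polyC U *m E *m Q = 0).
rewrite !jetsQ CK map_mx1 det1 mulr1 mulmxA UJV map_mx0 => /(_ erefl).
rewrite -mul_col_mx -map_col_mx det_mulmx det_divpow_jets mulr1 det_map_mx.
rewrite -wronskian_rowsE -mul_dsub_mx -map_dsubmx dsubmx_sgn_antidiag map_row_mx map_mx0.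
rewrite -[_^T]vsubmxK mul_row_col mul0mx addr0 det_mulmx det_map_mx.
rewrite -trmx_lsub det_tr -wronskian_rowsE mulrA -rmorphM mul_polyC => WU.
set d := _ * _ in WU; have d_neq0 : d != 0.
  rewrite mulf_neq0 // detZ mulf_neq0 ?expf_neq0 ?oppr_eq0 ?oner_eq0 //.
  by rewrite -unitfE -unitmxE sgn_antidiag_unitmx.
by exists d^-1; rewrite ?invr_eq0 // -WU scalerA mulVf ?scale1r.
Qed.

End DividedPowers.

Lemma annih_annih_sub (F : fieldType) n (X : 'M[F]_n) : (annih (annih X) <= X)%MS.
Proof.
have X_sub : (X <= annih (annih X))%MS.
  by apply/sub_kermxP; rewrite -[X in X *m _]trmxK -trmx_mul mulmx_ker trmx0.
rewrite -(mxrank_leqif_sup X_sub).2 !mxrank_ker !mxrank_tr mxrank_ker mxrank_tr.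
by rewrite subKn ?rank_leq_col.
Qed.

Lemma mxrank_annih (F : fieldType) m (X : 'M[F]_(m.*2)) :
  \rank X = m -> \rank (annih X) = m.
Proof. by move=> rX; rewrite mxrank_ker mxrank_tr rX -addnn addnK. Qed.

Unset Implicit Arguments. Set Strict Implicit.

Theorem lemma3p1 (R : realType) (m : nat) (hm : (2 <= m)%N)
    (H : 'M[R[i]]_(m.*2)) (hH : \rank H = m) :
  proj_eq (Wr (symp_perp H)) (Wr H).
Proof.
have rankU := mxrank_annih hH.
have rankV : \rank (annih (symp_perp H)) = m.
  apply/mxrank_annih/mxrank_annih.
  by rewrite mxrankMfree ?row_free_unit ?hH //; exact: sgn_antidiag_unitmx.
have orth : row_base (annih H) *m sgn_antidiag (m.*2)
              *m (row_base (annih (symp_perp H)))^T = 0.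
  have /submxP[Z ->] : (row_base (annih (symp_perp H)) <= H *m sympJ _ m)%MS.
    by rewrite eq_row_base annih_annih_sub.
  have UH : row_base (annih H) *m H^T = 0 by apply/sub_kermxP; rewrite eq_row_base.
  rewrite !trmx_mul !mulmxA -(mulmxA _ (sgn_antidiag _)) sgn_antidiag_mul_tr.
  by rewrite mulmx1 UH !mul0mx.
change (proj_eq (wronskian_rows (row_base (annih (symp_perp H))))
                (wronskian_rows (row_base (annih H)))).
move: (row_base_free (annih H)) (row_base_free (annih (symp_perp H))) orth.
move: (row_base (annih H)) (row_base (annih (symp_perp H))).
rewrite rankU rankV -addnn => U V freeU freeV.
exact: (wronskian_rows_sgn_antidiag_orth (pchar_num _) freeU freeV).
Qed.
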